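(* Let $X$ be a locally compact separable metric space which is not discrete, endowed with its Borel $\sigma$-algebra, let $V$ be a finite-dimensional real vector space and let $|\cdot|_V$ be a seminorm on $V$ which is not strictly convex. Then there exists a sequence $(\mu_n)_{n\in\mathbb{N}}$ of Borel vector measures from $X$ to $V$ converging widely to a Borel vector measure $\mu$ such that $|\mu_n|_V(X)\to|\mu|_V(X)$, but the sequence $(\mathcal{R}(\mu_n))_{n\in\mathbb{N}}$ is constant and different from $\mathcal{R}(\mu)$ (so in particular the ranges do not converge to $\mathcal{R}(\mu)$).
   Context: A seminorm $|\cdot|_V$ is strictly convex if for all linearly independent $v,w\in V$, $|v+w|_V<|v|_V+|w|_V$. A vector measure is a countably additive map $\mu:\Sigma\to V$. The total variation is $|\mu|_V(A)=\sup\{\sum_{i=1}^m|\mu(E_i)|_V : E_1,\dots,E_m\in\Sigma \text{ pairwise disjoint subsets of } A\}$. The range is $\mathcal{R}(\mu)=\overline{\mathrm{conv}}\{\mu(E):E\in\Sigma\}$. Wide convergence of $\mu_n$ to $\mu$ means $\int_X\varphi\,d\mu_n\to\int_X\varphi\,d\mu$ for every $\varphi\in C_c(X,\mathbb{R})$. *)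

From HB Require Import structures.
From mathcomp Require Import all_boot all_order all_algebra.
From mathcomp Require Import all_classical all_reals all_analysis.
Set Implicit Arguments. Unset Strict Implicit. Unset Printing Implicit Defensive.
Import Order.TTheory GRing.Theory Num.Theory.
Import numFieldNormedType.Exports.
Local Open Scope classical_set_scope.
Local Open Scope ring_scope.

(* V is modelled as 'rV[R]_n (every finite-dimensional real vector space). *)

Section Defs.
Variable R : realType.

Definition is_seminorm (n : nat) (N : 'rV[R]_n -> R) : Prop :=
  [/\ forall x, 0 <= N x,
      forall (a : R) x, N (a *: x) = `|a| * N x
    & forall x y, N (x + y) <= N x + N y].

Definition lin_indep2 (n : nat) (v w : 'rV[R]_n) : Prop :=
  forall a b : R, a *: v + b *: w = 0 -> a = 0 /\ b = 0.

Definition strictly_convex (n : nat) (N : 'rV[R]_n -> R) : Prop :=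
  forall v w, lin_indep2 v w -> N (v + w) < N v + N w.

Variable X : pseudoPMetricType R.

Definition borel_sets : set (set X) := <<s [set A | open A] >>.
Definition BX := g_sigma_algebraType [set A : set X | open A].

Definition separable_space : Prop := exists D : set X, countable D /\ dense D.

Definition non_discrete : Prop := exists x : X, ~ open [set x].

Definition vector_measure (n : nat) (mu : set X -> 'rV[R]_n) : Prop :=
  forall F : nat -> set X, (forall i, borel_sets (F i)) ->
    trivIset setT F ->
    (fun N => \sum_(i < N) mu (F i)) @ \oo --> mu (\bigcup_i F i).

Definition vtotal_variation (n : nat) (N : 'rV[R]_n -> R) (mu : set X -> 'rV[R]_n)
    (A : set X) : \bar R :=
  ereal_sup [set r : \bar R | exists (m : nat) (E : 'I_m -> set X),
     [/\ forall i, borel_sets (E i) /\ E i `<=` A,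
         forall i j, i != j -> E i `&` E j = set0 &
         r = (\sum_(i < m) N (mu (E i)))%:E]].

Definition conv_hull (n : nat) (S : set 'rV[R]_n) : set 'rV[R]_n :=
  [set x | exists m (w : 'I_m -> R) (p : 'I_m -> 'rV[R]_n),
     [/\ forall i, 0 <= w i, \sum_(i < m) w i = 1, forall i, S (p i) &
         x = \sum_(i < m) w i *: p i]].

Definition vrange (n : nat) (mu : set X -> 'rV[R]_n) : set 'rV[R]_n :=
  closure (conv_hull [set mu E | E in borel_sets]).

Definition pos_var (nu : set X -> R) : set BX -> \bar R :=
  fun A => ereal_sup [set (nu B)%:E | B in [set B | borel_sets B /\ B `<=` A]].
Definition neg_var (nu : set X -> R) : set BX -> \bar R :=
  fun A => ereal_sup [set (- nu B)%:E | B in [set B | borel_sets B /\ B `<=` A]].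

Definition signed_integral (nu : set X -> R) (phi : X -> R) : R :=
  fine (\int[pos_var nu]_(x in [set: BX]) (phi x)%:E) -
  fine (\int[neg_var nu]_(x in [set: BX]) (phi x)%:E).

Definition vector_integral (n : nat) (mu : set X -> 'rV[R]_n) (phi : X -> R)
  : 'rV[R]_n := \row_i signed_integral (fun A => mu A 0 i) phi.

Definition Cc (phi : X -> R) : Prop :=
  continuous phi /\ compact (closure [set x | phi x != 0]).

Definition wide_cvg (n : nat) (mu_ : nat -> set X -> 'rV[R]_n)
    (mu : set X -> 'rV[R]_n) : Prop :=
  forall phi, Cc phi ->
    (fun k => vector_integral (mu_ k) phi) @ \oo --> vector_integral mu phi.

End Defs.

From HB Require Import structures.
From mathcomp Require Import all_boot all_order all_algebra.
From mathcomp Require Import all_classical all_reals all_analysis.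
From mathcomp Require Import measurable_realfun.
From mathcomp Require Import ring lra.
Import Order.TTheory GRing.Theory Num.Theory.
Import numFieldNormedType.Exports.
Local Open Scope classical_set_scope.
Local Open Scope ring_scope.

(* If [N (v + w) = N v + N w] for independent [v, w], put [v] at a
   non-isolated point [x] and [w] at points [y_k -> x]: the measures
   [v δ_x + w δ_(y_k)] converge widely to [(v + w) δ_x], all total
   variations equal [N v + N w = N (v + w)], every [μ_k] has the
   parallelogram spanned by [v, w] as range, but the range of the limit is
   the segment [[0, v + w]], which does not contain [v]. *)

Section seminorm.
Context {R : realType} {n : nat} {N : 'rV[R]_n -> R}.
Hypothesis hN : is_seminorm N.

Lemma seminorm0 : N 0 = 0.
Proof. by case: hN => _ NZ _; rewrite -(scale0r 0) NZ normr0 mul0r. Qed.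

Lemma not_strictly_convexP : ~ strictly_convex N ->
  exists v w, lin_indep2 v w /\ N (v + w) = N v + N w.
Proof.
move=> Nnsc; apply: contrapT => Nsc; apply: Nnsc => v w vw.
have [_ _ N_triangle] := hN; rewrite lt_neqAle N_triangle andbT.
by apply/eqP => eqN; apply: Nsc; exists v, w.
Qed.

End seminorm.

Section segment.
Context {R : realType} {n : nat}.

Lemma lin_indep2_neq_scale_add (v w : 'rV[R]_n) (t : R) :
  lin_indep2 v w -> v <> t *: (v + w).
Proof.
move=> vw vE; have /vw[t1 t0] : (1 - t) *: v + (- t) *: w = 0.
  by rewrite scalerBl scale1r scaleNr -addrA -opprD -scalerDr -vE subrr.
by move: t1; rewrite -[t]opprK t0 oppr0 subr0 => /eqP; rewrite oner_eq0.
Qed.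

Lemma conv_hull_sub_segment (u : 'rV[R]_n) (S : set 'rV[R]_n) :
  S `<=` [set 0; u] -> conv_hull S `<=` [set t *: u | t in `[0, 1]%classic].
Proof.
move=> Su _ [m [w [p [w0 w1 Sp ->]]]].
pose c i : R := (p i != 0)%:R.
have pE i : p i = c i *: u.
  rewrite /c; have [->|pi0] := eqVneq (p i) 0; first by rewrite scale0r.
  by rewrite scale1r; case: (Su _ (Sp i)) => // pi0'; rewrite pi0' eqxx in pi0.
exists (\sum_(i < m) w i * c i).
  rewrite /= in_itv /=; apply/andP; split.
    by apply: sumr_ge0 => i _; rewrite mulr_ge0 // /c ler0n.
  rewrite -w1; apply: ler_sum => i _; rewrite -[leRHS]mulr1.
  by apply: ler_wpM2l => //; rewrite /c; case: (_ != _).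
by rewrite scaler_suml; apply: eq_bigr => i _; rewrite pE scalerA.
Qed.

Lemma closed_segment (u : 'rV[R]_n) : closed [set t *: u | t in `[0, 1]%classic].
Proof.
apply: compact_closed; first exact: norm_hausdorff.
apply: continuous_compact; last exact: segment_compact.
by apply: continuous_subspaceT => t; exact: scalel_continuous.
Qed.

End segment.

Section point_masses.
Context {R : realType} {X : pseudoPMetricType R} {n : nat}.
Hypothesis hX : hausdorff_space X.

Lemma borel_set1 (x : X) : borel_sets [set x].
Proof.
have closed_x : closed [set x].
  by apply: accessible_closed_set1; apply: hausdorff_accessible.
have : measurable (~` [set x] : set (BX X)).
  by apply: sub_sigma_algebra; exact: closed_openC.
by move/measurableC; rewrite setCK.
Qed.

Lemma borel_sub_set2 (x y : X) (B : set X) : B `<=` [set x; y] -> borel_sets B.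
Proof.
move=> Bxy; have -> : B = (B `&` [set x]) `|` (B `&` [set y]).
  by rewrite -setIUr; apply/esym/setIidl.
have borel_sub1 z : borel_sets (B `&` [set z]).
  have [->|->] := @subset_set1 _ (B `&` [set z]) z (@subIsetr _ _ _).
    exact: (@measurable0 _ (BX X)).
  exact: borel_set1.
exact: (@measurableU _ (BX X) _ _ (borel_sub1 x) (borel_sub1 y)).
Qed.

Lemma not_open_set1_cvg (x : X) : ~ open [set x] ->
  exists y : nat -> X, (forall k, x <> y k) /\ y @ \oo --> x.
Proof.
move=> x_not_open.
have near_x k : exists z, ball x k.+1%:R^-1 z /\ x <> z.
  apply: contrapT => no_z; apply: x_not_open; rewrite openE => z /= ->.
  apply/nbhs_ballP; exists k.+1%:R^-1 => //= t xt.
  by apply: contrapT => tx; apply: no_z; exists t; split => // xt'; apply: tx.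
have [y y_near] := choice near_x.
exists y; split => [k|]; first exact: (y_near k).2.
apply/cvg_ballP => e e0; near=> k; apply: (le_ball _ (y_near k).1).
near: k; have := @near_infty_natSinv_lt R (PosNum e0).
by apply: filterS => k /ltW.
Unshelve. all: end_near.
Qed.

Definition point_mass {V : zmodType} (x : X) (v : V) (E : set X) : V :=
  if `[< E x >] then v else 0.

Definition two_point_mass {V : zmodType} (x y : X) (v w : V) (E : set X) : V :=
  point_mass x v E + point_mass y w E.

Lemma point_mass_in {V : zmodType} (x : X) (v : V) E : E x -> point_mass x v E = v.
Proof. by move=> Ex; rewrite /point_mass asboolT. Qed.

Lemma point_mass_notin {V : zmodType} (x : X) (v : V) E :
  ~ E x -> point_mass x v E = 0.
Proof. by move=> Ex; rewrite /point_mass asboolF. Qed.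

Lemma sum_point_mass {V : zmodType} m (x : X) (v : V) (E : 'I_m -> set X) :
  (forall i j, E i x -> E j x -> i = j) ->
  \sum_(i < m) point_mass x v (E i) = point_mass x v (\bigcup_i E i).
Proof.
move=> Ex_uniq; rewrite /point_mass; case: asboolP => [[j _ Ejx]|Ex].
  rewrite (bigD1 j) //= asboolT // big1 ?addr0 // => i ij.
  by rewrite asboolF // => Eix; move: ij; rewrite (Ex_uniq _ _ Eix Ejx) eqxx.
by rewrite big1 // => i _; rewrite asboolF // => Eix; apply: Ex; exists i.
Qed.

Lemma point_mass_le (x : X) (c : R) E : 0 <= c -> point_mass x c E <= c.
Proof. by rewrite /point_mass; case: asboolP. Qed.

Lemma point_mass_series (x : X) (v : 'rV[R]_n) (F : nat -> set X) :
  trivIset setT F ->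
  (fun N => \sum_(i < N) point_mass x v (F i)) @ \oo
    --> point_mass x v (\bigcup_i F i).
Proof.
move=> tF; have partial_sum N :
    \sum_(i < N) point_mass x v (F i) = point_mass x v (\bigcup_(i : 'I_N) F i).
  by apply: sum_point_mass => i j Fix Fjx; apply/val_inj/tF => //; exists x.
under eq_fun do rewrite partial_sum.
rewrite /point_mass; case: asboolP => [[j _ Fjx]|Fx]; apply: cvg_near_cst.
  exists j.+1 => // N /= jN; rewrite asboolT //.
  by exists (Ordinal jN).
exists 0%N => // N _; rewrite asboolF // => -[i _ Fix]; apply: Fx; by exists i.
Qed.

Lemma two_point_mass_vector_measure (x y : X) (v w : 'rV[R]_n) :
  vector_measure (two_point_mass x y v w).
Proof.
move=> F _ tF; rewrite /two_point_mass; under eq_fun do rewrite big_split /=.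
by apply: cvgD; exact: point_mass_series.
Qed.

Lemma image_two_point_mass (x y : X) (v w : 'rV[R]_n) : x <> y ->
  [set two_point_mass x y v w E | E in borel_sets (X:=X)] = [set 0; v; w; v + w].
Proof.
move=> xy; apply/seteqP; split.
  move=> _ [E _ <-]; rewrite /two_point_mass /point_mass.
  by do 2 case: asboolP => _; rewrite ?addr0 ?add0r /=; tauto.
have yx : ~ [set x] y by move=> /esym.
rewrite /two_point_mass; move=> z [[[->|->]|->]|->].
- exists set0; first exact: (@measurable0 _ (BX X)).
  by rewrite !point_mass_notin // addr0.
- exists [set x]; first exact: borel_set1.
  by rewrite point_mass_in // point_mass_notin ?addr0.
- exists [set y]; first exact: borel_set1.
  by rewrite point_mass_notin // point_mass_in ?add0r.
- exists setT; first exact: (@measurableT _ (BX X)).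
  by rewrite !point_mass_in.
Qed.

Lemma total_variation_two_point_mass (N : 'rV[R]_n -> R) (x y : X)
    (v w : 'rV[R]_n) : x <> y -> is_seminorm N ->
  vtotal_variation N (two_point_mass x y v w) setT = (N v + N w)%:E.
Proof.
move=> xy hN; have [N_ge0 _ N_triangle] := hN.
apply/eqP; rewrite eq_le; apply/andP; split.
  apply: ge_ereal_sup => _ [m [E [_ E_disj ->]]]; rewrite lee_fin.
  have E_uniq z i j : E i z -> E j z -> i = j.
    move=> Eiz Ejz; apply/eqP; apply: contraPP Eiz => /negP/E_disj Eij Eiz.
    by have : (E i `&` E j) z by []; rewrite Eij.
  have N_point_mass z u F : N (point_mass z u F) = point_mass z (N u) F.
    by rewrite /point_mass; case: asboolP => // _; rewrite (seminorm0 hN).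
  apply: (@le_trans _ _ (\sum_(i < m) two_point_mass x y (N v) (N w) (E i))).
    apply: ler_sum => i _.
    by rewrite /two_point_mass -!N_point_mass; exact: N_triangle.
  rewrite big_split /= !sum_point_mass; try exact: E_uniq.
  by apply: lerD; apply: point_mass_le.
apply: ereal_sup_ubound.
exists 2%N, (fun i : 'I_2 => if i == ord0 then [set x] else ~` [set x]); split.
- move=> i; split => //; case: ifP => _; first exact: borel_set1.
  by apply: (@measurableC _ (BX X)); exact: borel_set1.
- by move=> [[|[|//]] ?] [[|[|//]] ?] //= _; rewrite ?setICr ?setICl.
- rewrite big_ord_recr big_ord1 /= /two_point_mass.
  rewrite point_mass_in // point_mass_notin ?addr0; last by move/esym.
  by rewrite point_mass_notin ?point_mass_in ?add0r //=; exact: nesym.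
Qed.

Lemma mem_vrange (mu : set X -> 'rV[R]_n) E : borel_sets E -> vrange mu (mu E).
Proof.
move=> bE; apply: subset_closure.
exists 1%N, (fun _ => 1), (fun _ => mu E); split => //.
- by rewrite big_ord1.
- by move=> _; exists E.
- by rewrite big_ord1 scale1r.
Qed.

Lemma vrange_sub_segment (u : 'rV[R]_n) (mu : set X -> 'rV[R]_n) :
  [set mu E | E in borel_sets (X:=X)] `<=` [set 0; u] ->
  vrange mu `<=` [set t *: u | t in `[0, 1]%classic].
Proof.
move=> mu01; rewrite [X in _ `<=` X](closure_id _).1; last exact: closed_segment.
by apply: closureS; exact: conv_hull_sub_segment.
Qed.

Lemma vrange_two_point_mass_neq (x y y' : X) (v w : 'rV[R]_n) :
  lin_indep2 v w -> x <> y -> x <> y' ->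
  vrange (two_point_mass x y v w) <> vrange (two_point_mass x y' (v + w) 0).
Proof.
move=> vw xy xy' eq_vrange.
have : vrange (two_point_mass x y' (v + w) 0) v.
  rewrite -eq_vrange; have := mem_vrange (two_point_mass x y v w) _ (borel_set1 x).
  rewrite /two_point_mass point_mass_in // point_mass_notin ?addr0 //.
  by move/esym.
case/(vrange_sub_segment (v + w)) => [|t _ /esym]; last exact: lin_indep2_neq_scale_add.
by rewrite image_two_point_mass // addr0 => z /=; tauto.
Qed.

Lemma continuous_borel_measurable (phi : X -> R) : continuous phi ->
  measurable_fun (setT : set (BX X)) (fun x : BX X => (phi x)%:E).
Proof.
move=> phi_cont; apply/measurable_EFinP.
apply: (measurability _ (RGenOpens.measurableE R)).
move=> _ [_ [a [b ->]] <-]; rewrite setTI.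
by apply: sub_sigma_algebra; apply: (continuousP phi).1 => //; exact: interval_open.
Qed.

Lemma max0_ge0 (a : R) : 0 <= Num.max a 0.
Proof. by rewrite le_max lexx orbT. Qed.

Lemma max0_subN (a : R) : Num.max a 0 - Num.max (- a) 0 = a.
Proof. by case: (leP 0 a) => a0; case: (leP 0 (- a)) => a0'; lra. Qed.

(* [a⁺ δ_x + b⁺ δ_y], the positive variation of [a δ_x + b δ_y] *)
Definition dirac_pair (x y : X) (a b : R) : set (BX X) -> \bar R :=
  measure_add (mscale (NngNum (max0_ge0 a)) (@dirac _ (BX X) x R))
              (mscale (NngNum (max0_ge0 b)) (@dirac _ (BX X) y R)).

Lemma dirac_pairE (x y : X) (a b : R) (A : set (BX X)) :
  dirac_pair x y a b A = (two_point_mass x y (Num.max a 0) (Num.max b 0) A)%:E.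
Proof.
rewrite /dirac_pair measure_addE /=; unfold mscale, dirac.
rewrite -!EFinM -EFinD !indicE /two_point_mass /point_mass; congr EFin.
case: asboolP => Ax; case: asboolP => Ay;
  by rewrite ?(mem_set Ax) ?(memNset Ax) ?(mem_set Ay) ?(memNset Ay) /= ?mulr1 ?mulr0.
Qed.

Lemma point_mass_le_pos_part (x : X) (c : R) (A B : set X) :
  B `<=` A -> point_mass x c B <= point_mass x (Num.max c 0) A.
Proof.
move=> BA; rewrite /point_mass; case: asboolP => Bx.
  by rewrite asboolT ?le_max ?lexx //; exact: BA.
by case: asboolP => _; rewrite ?max0_ge0.
Qed.

Lemma pos_var_two_point_mass (x y : X) (a b : R) : x <> y ->
  pos_var (two_point_mass x y a b) = dirac_pair x y a b.
Proof.
move=> xy; apply/funext => A; rewrite dirac_pairE.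
apply/eqP; rewrite eq_le; apply/andP; split.
  apply: ge_ereal_sup => _ [B [_ BA] <-]; rewrite lee_fin.
  by apply: lerD; exact: point_mass_le_pos_part.
apply: ereal_sup_ubound.
(* the positive set of [a δ_x + b δ_y] inside [A] *)
pose B := A `&` [set z | z = x /\ 0 <= a \/ z = y /\ 0 <= b].
exists B.
  split; last exact: subIsetl.
  by apply: (@borel_sub_set2 x y) => z [_ [[->]|[->]]]; [left|right].
have pos_part (z : X) (c : R) : (B z <-> A z /\ 0 <= c) ->
    point_mass z c B = point_mass z (Num.max c 0) A.
  move=> Bz; rewrite /point_mass; case: asboolP => [/Bz[Az c0]|nBz].
    by rewrite asboolT // max_l.
  case: asboolP => // Az; case: (leP 0 c) => // c0.
  by case: nBz; exact/Bz.
rewrite /two_point_mass !pos_part //; split.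
- by case=> Ay [[yx]|[_ b0]]; [case: xy|].
- by case=> Ay b0; split => //; right.
- by case=> Ax [[_ a0]|[xy']]; [|case: xy].
- by case=> Ax a0; split => //; left.
Qed.

Lemma integral_dirac_pair (x y : X) (a b : R) (phi : X -> R) : continuous phi ->
  (\int[dirac_pair x y a b]_(z in [set: BX X]) (phi z)%:E)%E =
  (Num.max a 0 * phi x + Num.max b 0 * phi y)%:E.
Proof.
move=> phi_cont; have phi_meas := continuous_borel_measurable _ phi_cont.
have phi_pos := measurable_funepos phi_meas.
have phi_neg := measurable_funeneg phi_meas.
rewrite integralE /dirac_pair !ge0_integral_measure_add //.
rewrite !ge0_integral_mscale // !integral_dirac // !diracT !mul1e.
rewrite !funeposE !funenegE /= -!EFin_max -!EFinM -!EFinD; congr EFin.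
by rewrite -[in RHS](max0_subN (phi x)) -[in RHS](max0_subN (phi y)); ring.
Qed.

Lemma signed_integral_two_point_mass (x y : X) (a b : R) (phi : X -> R) :
  x <> y -> continuous phi ->
  signed_integral (two_point_mass x y a b) phi = a * phi x + b * phi y.
Proof.
move=> xy phi_cont; rewrite /signed_integral pos_var_two_point_mass //.
have -> : neg_var (two_point_mass x y a b) = pos_var (two_point_mass x y (- a) (- b)).
  rewrite [LHS]/neg_var -/(pos_var (fun B => - two_point_mass x y a b B)).
  congr pos_var; apply/funext => B; rewrite /two_point_mass /point_mass.
  by do 2 case: asboolP => _; rewrite opprD ?oppr0.
rewrite pos_var_two_point_mass // !integral_dirac_pair //=.
by rewrite -[in RHS](max0_subN a) -[in RHS](max0_subN b); ring.
Qed.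

Lemma vector_integral_two_point_mass (x y : X) (v w : 'rV[R]_n) (phi : X -> R) :
  x <> y -> continuous phi ->
  vector_integral (two_point_mass x y v w) phi = phi x *: v + phi y *: w.
Proof.
move=> xy phi_cont; apply/rowP => i; rewrite !mxE.
have -> : (fun A => two_point_mass x y v w A 0 i) = two_point_mass x y (v 0 i) (w 0 i).
  apply/funext => A; rewrite /two_point_mass /point_mass !mxE.
  by do 2 case: asboolP => _; rewrite ?mxE.
by rewrite signed_integral_two_point_mass // mulrC [_ * phi y]mulrC.
Qed.

Lemma two_point_mass_wide_cvg (x y' : X) (y : nat -> X) (v w : 'rV[R]_n) :
  (forall k, x <> y k) -> x <> y' -> y @ \oo --> x ->
  wide_cvg (fun k => two_point_mass x (y k) v w) (two_point_mass x y' (v + w) 0).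
Proof.
move=> xy xy' y_cvg phi [phi_cont _].
under eq_fun do rewrite vector_integral_two_point_mass //.
rewrite vector_integral_two_point_mass // scaler0 addr0 scalerDr.
apply: cvgD; first exact: cvg_cst.
by apply: cvgZr_tmp; exact: (continuous_cvg _ (phi_cont x) y_cvg).
Qed.

End point_masses.

Theorem proposition1p2 (R : realType) (X : pseudoPMetricType R) (n : nat)
    (N : 'rV[R]_n -> R) :
  hausdorff_space X ->
  locally_compact [set: X] ->
  separable_space X ->
  non_discrete X ->
  is_seminorm N ->
  ~ strictly_convex N ->
  exists (mu_ : nat -> set X -> 'rV[R]_n) (mu : set X -> 'rV[R]_n),
    [/\ (forall k, vector_measure (mu_ k)) /\ vector_measure mu,
        wide_cvg mu_ mu,
        (fun k => vtotal_variation N (mu_ k) setT) @ \oo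
          --> vtotal_variation N mu setT,
        forall k, vrange (mu_ k) = vrange (mu_ 0%N)
      & vrange (mu_ 0%N) <> vrange mu].
Proof.
move=> hX _ _ [x x_not_open] hN /(not_strictly_convexP hN)[v [w [vw Nvw]]].
have [y [xy y_cvg]] := not_open_set1_cvg _ x_not_open.
exists (fun k => two_point_mass x (y k) v w), (two_point_mass x (y 0%N) (v + w) 0).
split.
- by split => [k|]; exact: two_point_mass_vector_measure.
- exact: two_point_mass_wide_cvg.
- rewrite total_variation_two_point_mass // (seminorm0 hN) addr0 Nvw.
  under eq_fun do rewrite total_variation_two_point_mass //.
  exact: cvg_cst.
- by move=> k; rewrite /vrange !image_two_point_mass.
- exact: vrange_two_point_mass_neq.
Qed.
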